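(* Let $a\in\mathbb{R}$, $q,r>0$ and let $\kappa\ge1$ be an integer. For $k_1\in\mathbb{R}^{\kappa\times 1}$ and $k_2\in\mathbb{R}^{1\times\kappa}$ write $\mathbf{k}:=k_2k_1\in\mathbb{R}$, let $\mathcal{K}:=\{(k_1,k_2): a-\mathbf{k}<0\}$, define $\mathcal{L}(k_1,k_2):=-\frac{q+r\mathbf{k}^2}{2(a-\mathbf{k})}$ on $\mathcal{K}$, and $\underline{\mathcal{L}}:=\inf_{\mathcal{K}}\mathcal{L}$. For $\gamma>0$ let $\mathcal{K}_\gamma:=\{(k_1,k_2)\in\mathcal{K}: \|k_1+k_2^\top\|^2\ge\gamma\}$. Then for every $\gamma>\max(0,4a)$ the constant $$\underline{\mu}:=\frac{r}{4}\min\left\{1,\sqrt{\frac{\gamma^2}{(\gamma-4a)^2}}\right\}$$ is positive and $$\|\nabla\mathcal{L}(k_1,k_2)\|\ \ge\ \sqrt{\underline{\mu}\,(\mathcal{L}(k_1,k_2)-\underline{\mathcal{L}})}\qquad\text{for all }(k_1,k_2)\in\mathcal{K}_\gamma.$$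
   Context: $\mathcal{L}$ is the LQR cost $\mathbb{E}_{x_0\sim\mathcal{N}(0,1)}\int_0^\infty(qx^2+ru^2)dt$ of $\dot x=ax+u$, $u=-k_2k_1x$, overparameterized through the factorization $\mathbf{k}=k_2k_1$. The gradient $\nabla\mathcal{L}$ is with respect to all entries of $(k_1,k_2)$. *)

From HB Require Import structures.
From mathcomp Require Import all_boot all_order all_algebra.
From mathcomp Require Import all_classical all_reals all_analysis.
Set Implicit Arguments. Unset Strict Implicit. Unset Printing Implicit Defensive.
Import Order.TTheory GRing.Theory Num.Theory.
Import numFieldNormedType.Exports.
Local Open Scope classical_set_scope.
Local Open Scope ring_scope.

Section LQR.
Variables (R : realType) (a q r : R) (n : nat).

Definition kgain (k1 : 'cV[R]_n) (k2 : 'rV[R]_n) : R := (k2 *m k1) 0 0.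

Definition stab (k1 : 'cV[R]_n) (k2 : 'rV[R]_n) : Prop := a - kgain k1 k2 < 0.

(* LQR cost (formula valid on K) *)
Definition Lcost (k1 : 'cV[R]_n) (k2 : 'rV[R]_n) : R :=
  - (q + r * (kgain k1 k2) ^+ 2) / (2 * (a - kgain k1 k2)).

Definition Linf : R :=
  inf [set Lcost p.1 p.2 | p in [set p : 'cV[R]_n * 'rV[R]_n | stab p.1 p.2]].

Definition dL_dk1 (k1 : 'cV[R]_n) (k2 : 'rV[R]_n) (i : 'I_n) : R :=
  derive1 (fun t : R => Lcost (k1 + t *: delta_mx i 0) k2) 0.
Definition dL_dk2 (k1 : 'cV[R]_n) (k2 : 'rV[R]_n) (i : 'I_n) : R :=
  derive1 (fun t : R => Lcost k1 (k2 + t *: delta_mx 0 i)) 0.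

Definition grad_norm (k1 : 'cV[R]_n) (k2 : 'rV[R]_n) : R :=
  Num.sqrt (\sum_(i < n) (dL_dk1 k1 k2 i) ^+ 2 + \sum_(i < n) (dL_dk2 k1 k2 i) ^+ 2).

Definition sumsq (k1 : 'cV[R]_n) (k2 : 'rV[R]_n) : R :=
  \sum_(i < n) (k1 i 0 + k2 0 i) ^+ 2.

Definition stab_gamma (gamma : R) (k1 : 'cV[R]_n) (k2 : 'rV[R]_n) : Prop :=
  stab k1 k2 /\ gamma <= sumsq k1 k2.

End LQR.

From HB Require Import structures.
From mathcomp Require Import all_boot all_order all_algebra.
From mathcomp Require Import all_classical all_reals all_analysis.
From mathcomp Require Import ring lra.
Import Order.TTheory GRing.Theory Num.Theory.
Import numFieldNormedType.Exports.
Set Implicit Arguments. Unset Strict Implicit.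
Local Open Scope ring_scope.

(* The cost depends on (k1, k2) only through the gain k = k2 k1, so
   ||grad L||^2 = L'(k)^2 (||k1||^2 + ||k2||^2). Completing the square gives the
   scalar gradient domination r/4 (L(k) - L* ) <= L'(k)^2 (k - a), where
   L* = r a + sqrt r sqrt (q + r a^2) <= Linf. On K_gamma, the bounds
   ||k1 + k2^T||^2 >= gamma and 2k <= ||k1||^2 + ||k2||^2 force
   ||k1||^2 + ||k2||^2 >= min(1, gamma / (gamma - 4a)) (k - a). *)

Section ScalarCost.
Variables (R : realType) (a q r : R).

Definition cost (k : R) : R := - (q + r * k ^+ 2) / (2 * (a - k)).

Definition cost_deriv (k : R) : R :=
  (r * k ^+ 2 - 2 * a * r * k - q) / (2 * (a - k) ^+ 2).

Definition cost_min : R := r * a + Num.sqrt r * Num.sqrt (q + r * a ^+ 2).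

Lemma derive1_cost_line (k y : R) : a - k != 0 ->
  derive1 (fun t : R => cost (k + t * y)) 0 = cost_deriv k * y.
Proof.
move=> ak.
pose F t := - (q + r * (k + t * y) ^+ 2).
pose G t := 2 * (a - (k + t * y)).
have dF : is_derive (0 : R) (1 : R) F (- (r * (2 * k * y))).
  by apply: is_derive_eq; rewrite /GRing.scale /=; ring.
have dG : is_derive (0 : R) (1 : R) G (- (2 * y)).
  by apply: is_derive_eq; rewrite /GRing.scale /=; ring.
have G0 : G 0 != 0 by rewrite /G mul0r addr0 mulf_neq0 // pnatr_eq0.
have dFG := is_deriveM dF (is_deriveV G0 dG).
rewrite derive1E (_ : (fun t => _) = F * (fun t => (G t)^-1)) //.
rewrite derive_val /F /G /= !mul0r !addr0 /GRing.scale /=.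
by rewrite /cost_deriv; field; rewrite ak.
Qed.

Hypotheses (q_gt0 : 0 < q) (r_gt0 : 0 < r).

Let discr_gt0 : 0 < q + r * a ^+ 2.
Proof. by rewrite ltr_wpDr // mulr_ge0 ?sqr_ge0 // ltW. Qed.

Section Completion.
Variable k : R.
Hypothesis a_lt_k : a < k.

Let u : R := Num.sqrt (q + r * a ^+ 2).
Let v : R := Num.sqrt r.

Let u_gt0 : 0 < u.
Proof. by rewrite sqrtr_gt0. Qed.

Let v_gt0 : 0 < v. Proof. by rewrite sqrtr_gt0. Qed.

Let q_sqrt : q = u ^+ 2 - v ^+ 2 * a ^+ 2.
Proof. by rewrite !sqr_sqrtr ?ltW //; ring. Qed.

Let r_sqrt : r = v ^+ 2.
Proof. by rewrite sqr_sqrtr // ltW. Qed.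

Let ka_neq0 : k - a != 0. Proof. by rewrite subr_eq0 gt_eqF. Qed.
Let ak_neq0 : a - k != 0. Proof. by rewrite subr_eq0 lt_eqF. Qed.

Lemma cost_sub_min :
  cost k - cost_min = (u - v * (k - a)) ^+ 2 / (2 * (k - a)).
Proof.
by rewrite /cost /cost_min -/u -/v q_sqrt r_sqrt; field; rewrite ka_neq0 ak_neq0.
Qed.

Lemma cost_derivE :
  cost_deriv k = (v * (k - a) - u) * (v * (k - a) + u) / (2 * (k - a) ^+ 2).
Proof. by rewrite /cost_deriv q_sqrt r_sqrt; field; rewrite ka_neq0 ak_neq0. Qed.

Lemma cost_min_le : cost_min <= cost k.
Proof.
rewrite -subr_ge0 cost_sub_min divr_ge0 ?sqr_ge0 //.
by rewrite mulr_ge0 // subr_ge0 ltW.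
Qed.

Lemma cost_gradient_domination :
  r / 4 * (cost k - cost_min) <= cost_deriv k ^+ 2 * (k - a).
Proof.
have s_gt0 : 0 < k - a by rewrite subr_gt0.
rewrite cost_sub_min cost_derivE.
set s := k - a; set w := u - v * s.
rewrite (_ : v * s - u = - w) ?sqrrN; last by rewrite /w; ring.
rewrite (_ : r / 4 * (w ^+ 2 / (2 * s)) = w ^+ 2 * (v ^+ 2 * s ^+ 2) / (8 * s ^+ 3));
  last by rewrite r_sqrt; field; rewrite gt_eqF.
rewrite (_ : _ * s = w ^+ 2 * (2 * (v * s + u) ^+ 2) / (8 * s ^+ 3));
  last by field; rewrite gt_eqF.
rewrite ler_pM2r ?invr_gt0 ?mulr_gt0 ?exprn_gt0 //.
rewrite ler_wpM2l ?sqr_ge0 // -exprMn.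
have vs_gt0 : 0 < v * s by rewrite mulr_gt0.
(* generalized first, since nra would unfold the local definitions u and v *)
move: (v * s) (u) vs_gt0 u_gt0 => x y x_gt0 y_gt0; nra.
Qed.

End Completion.
End ScalarCost.

Lemma gain_gap_le_sqnorm (R : realType) (a k m g N : R) :
  0 <= m -> m <= 1 -> m * (g - 4 * a) <= g -> 0 < g ->
  g <= N + 2 * k -> 2 * k <= N -> a < k -> m * (k - a) <= N.
Proof.
move=> m_ge0 m_le1 mg g_gt0 gN kN ak.
case: (lerP 0 a) => [a_ge0 | a_lt0]; nra.
Qed.

Section Factorized.
Variables (R : realType) (n : nat).
Variables (k1 : 'cV[R]_n) (k2 : 'rV[R]_n).

Definition factors_sqnorm : R :=
  \sum_(i < n) k1 i 0 ^+ 2 + \sum_(i < n) k2 0 i ^+ 2.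

Lemma kgain_sum : kgain k1 k2 = \sum_i k1 i 0 * k2 0 i.
Proof. by rewrite /kgain mxE; apply: eq_bigr => i _; rewrite mulrC. Qed.

Lemma kgainDk1 i (t : R) :
  kgain (k1 + t *: delta_mx i 0) k2 = kgain k1 k2 + t * k2 0 i.
Proof. by rewrite /kgain mulmxDr -scalemxAr -colE !mxE. Qed.

Lemma kgainDk2 i (t : R) :
  kgain k1 (k2 + t *: delta_mx 0 i) = kgain k1 k2 + t * k1 i 0.
Proof. by rewrite /kgain mulmxDl -scalemxAl -rowE !mxE. Qed.

Lemma sumsqE : sumsq k1 k2 = factors_sqnorm + 2 * kgain k1 k2.
Proof.
rewrite /sumsq kgain_sum mulr_sumr /factors_sqnorm -!big_split /=.
by apply: eq_bigr => i _; ring.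
Qed.

Lemma kgain_le_factors_sqnorm : 2 * kgain k1 k2 <= factors_sqnorm.
Proof.
rewrite -subr_ge0 (_ : _ - _ = \sum_(i < n) (k1 i 0 - k2 0 i) ^+ 2).
  by apply: sumr_ge0 => i _; apply: sqr_ge0.
rewrite kgain_sum mulr_sumr /factors_sqnorm -sumrN -!big_split /=.
by apply: eq_bigr => i _; ring.
Qed.

Variables (a q r : R).

Lemma dL_dk1E i : stab a k1 k2 ->
  dL_dk1 a q r k1 k2 i = cost_deriv a q r (kgain k1 k2) * k2 0 i.
Proof.
move=> st; rewrite /dL_dk1
  (_ : (fun t => _) = fun t => cost a q r (kgain k1 k2 + t * k2 0 i)).
  by rewrite derive1_cost_line // lt_eqF.
by apply/funext => t; rewrite /Lcost kgainDk1.
Qed.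

Lemma dL_dk2E i : stab a k1 k2 ->
  dL_dk2 a q r k1 k2 i = cost_deriv a q r (kgain k1 k2) * k1 i 0.
Proof.
move=> st; rewrite /dL_dk2
  (_ : (fun t => _) = fun t => cost a q r (kgain k1 k2 + t * k1 i 0)).
  by rewrite derive1_cost_line // lt_eqF.
by apply/funext => t; rewrite /Lcost kgainDk2.
Qed.

Lemma grad_normE : stab a k1 k2 ->
  grad_norm a q r k1 k2 =
  Num.sqrt (cost_deriv a q r (kgain k1 k2) ^+ 2 * factors_sqnorm).
Proof.
move=> st; rewrite /grad_norm /factors_sqnorm addrC mulrDr !mulr_sumr.
by congr (Num.sqrt _); congr (_ + _); apply: eq_bigr => i _;
  rewrite ?dL_dk1E ?dL_dk2E // exprMn mulrC.
Qed.

Lemma cost_min_le_Linf : 0 < q -> 0 < r -> stab a k1 k2 ->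
  cost_min a q r <= Linf a q r n.
Proof.
move=> q_gt0 r_gt0 st; apply: lb_le_inf.
  by exists (Lcost a q r k1 k2), (k1, k2).
by move=> _ [p st_p <-]; apply: cost_min_le => //; rewrite -subr_lt0.
Qed.

End Factorized.

Theorem corollary1 (R : realType) (a q r : R) (n : nat) (gamma : R) :
  0 < q -> 0 < r -> (1 <= n)%N -> Num.max 0 (4 * a) < gamma ->
  let mu := r / 4 * Num.min 1 (Num.sqrt (gamma ^+ 2 / (gamma - 4 * a) ^+ 2)) in
  0 < mu /\
  forall (k1 : 'cV[R]_n) (k2 : 'rV[R]_n),
    stab_gamma a gamma k1 k2 ->
    Num.sqrt (mu * (Lcost a q r k1 k2 - Linf a q r n)) <= grad_norm a q r k1 k2.
Proof.
move=> q_gt0 r_gt0 _; rewrite gt_max => /andP [g_gt0 g_gt4a] mu.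
have ga_gt0 : 0 < gamma - 4 * a by rewrite subr_gt0.
pose m := Num.min 1 (gamma / (gamma - 4 * a)).
have -> : mu = r / 4 * m.
  by rewrite /mu /m -expr_div_n sqrtr_sqr ger0_norm // divr_ge0 // ltW.
have m_gt0 : 0 < m by rewrite lt_min ltr01 divr_gt0.
split; first by rewrite !mulr_gt0 ?invr_gt0.
move=> k1 k2 [st gN]; rewrite grad_normE //; apply: ler_wsqrtr.
have ak : a < kgain k1 k2 by rewrite -subr_lt0.
have mN : m * (kgain k1 k2 - a) <= factors_sqnorm k1 k2.
  apply: (gain_gap_le_sqnorm (ltW m_gt0) _ _ g_gt0); rewrite -?sumsqE //.
  - by rewrite ge_min lexx.
  - by rewrite -ler_pdivlMr // ge_min lexx orbT.
  - exact: kgain_le_factors_sqnorm.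
apply: (@le_trans _ _ (m * (r / 4 * (Lcost a q r k1 k2 - cost_min a q r)))).
  rewrite -mulrA mulrCA; apply: ler_wpM2l; first exact: ltW.
  apply: ler_wpM2l; first by rewrite divr_ge0 ?ltW.
  by rewrite lerD2l lerN2 (cost_min_le_Linf q_gt0 r_gt0 st).
apply: (le_trans (ler_wpM2l (ltW m_gt0) (cost_gradient_domination q_gt0 r_gt0 ak))).
by rewrite mulrCA ler_wpM2l ?sqr_ge0.
Qed.
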